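(* Let the six equivalence operations $\equiv_0,\dots,\equiv_5$ on an ortholattice be as defined in the context. Then: (i) In every orthomodular lattice, $a' = a\equiv_i 0$ for all elements $a$ and each $i=0,1,\dots,5$. (ii) Let $t(a,b)$ be any term built from the variables $a,b$ and the constants $0,1$ using only the operations $\equiv_0,\dots,\equiv_5$ and orthocomplementation $'$. Then $t(a,b)$ is not equal in the free orthomodular lattice on the two generators $a,b$ (equivalently, is not identically equal in all orthomodular lattices) to any classical or quantum join or meet (in particular, to none of the implications $a\to_i b$, $i=0,\dots,5$, nor to their complements).
   Context: An orthomodular lattice (OML) is an ortholattice $(L,\cap,\cup,{}',0,1)$ satisfying $a\le b \Rightarrow b = a\cup(a'\cap b)$. The equivalence operations are $a\equiv_0 b=(a'\cup b)\cap(a\cup b')$, $a\equiv_1 b=(a\cup b')\cap(a'\cup(a\cap b))$, $a\equiv_2 b=(a\cup b')\cap(b\cup(a'\cap b'))$, $a\equiv_3 b=(a'\cup b)\cap(a\cup(a'\cap b'))$, $a\equiv_4 b=(a'\cup b)\cap(b'\cup(a\cap b))$, $a\equiv_5 b=(a\cap b)\cup(a'\cap b')$. The implications are $a\to_0 b=a'\cup b$, $a\to_1 b=a'\cup(a\cap b)$, $a\to_2 b=b\cup(a'\cap b')$, $a\to_3 b=(a'\cap b)\cup(a'\cap b')\cup(a\cap(a'\cup b))$, $a\to_4 b=(a\cap b)\cup(a'\cap b)\cup((a'\cup b)\cap b')$, $a\to_5 b=(a\cap b)\cup(a'\cap b)\cup(a'\cap b')$. A (classical or quantum) join, resp. meet,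 in two variables is a two-variable orthomodular-lattice term which, when evaluated in Boolean algebras, reduces to one of the classical joins $a\cup b$, $a\cup b'$, $a'\cup b$, $a'\cup b'$, resp. one of the classical meets $a\cap b$, $a\cap b'$, $a'\cap b$, $a'\cap b'$. *)

Record Ortholattice := {
  car :> Type;
  meet : car -> car -> car;
  join : car -> car -> car;
  compl : car -> car;
  zero : car;
  one : car;
  meetC : forall a b, meet a b = meet b a;
  joinC : forall a b, join a b = join b a;
  meetA : forall a b c, meet a (meet b c) = meet (meet a b) c;
  joinA : forall a b c, join a (join b c) = join (join a b) c;
  meet_absorb : forall a b, meet a (join a b) = a;
  join_absorb : forall a b, join a (meet a b) = a;
  join0 : forall a, join a zero = a;
  meet1 : forall a, meet a one = a;
  complK : forall a, compl (compl a) = a;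
  compl_anti : forall a b, meet a b = a -> meet (compl b) (compl a) = compl b;
  join_compl : forall a, join a (compl a) = one;
  meet_compl : forall a, meet a (compl a) = zero
}.

Arguments meet {_} _ _.
Arguments join {_} _ _.
Arguments compl {_} _.
Arguments zero {_}.
Arguments one {_}.

Definition le {L : Ortholattice} (a b : L) : Prop := meet a b = a.

Definition orthomodular (L : Ortholattice) : Prop :=
  forall a b : L, le a b -> b = join a (meet (compl a) b).

Definition boolean (L : Ortholattice) : Prop :=
  forall a b c : L, meet a (join b c) = join (meet a b) (meet a c).

Section Ops.
Variable L : Ortholattice.
Implicit Types a b : L.

Definition equiv0 a b := meet (join (compl a) b) (join a (compl b)).
Definition equiv1 a b := meet (join a (compl b)) (join (compl a) (meet a b)).
Definition equiv2 a b := meet (join a (compl b)) (join b (meet (compl a) (compl b))).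
Definition equiv3 a b := meet (join (compl a) b) (join a (meet (compl a) (compl b))).
Definition equiv4 a b := meet (join (compl a) b) (join (compl b) (meet a b)).
Definition equiv5 a b := join (meet a b) (meet (compl a) (compl b)).

(** equiv i for i = 0..5 (indices > 5 are never used: statements assume i <= 5) *)
Definition equiv (i : nat) : L -> L -> L :=
  match i with
  | 0 => equiv0 | 1 => equiv1 | 2 => equiv2 | 3 => equiv3 | 4 => equiv4
  | _ => equiv5
  end.

Definition classical (k : nat) : L -> L -> L :=
  match k with
  | 0 => fun a b => join a b
  | 1 => fun a b => join a (compl b)
  | 2 => fun a b => join (compl a) b
  | 3 => fun a b => join (compl a) (compl b)
  | 4 => fun a b => meet a b
  | 5 => fun a b => meet a (compl b)
  | 6 => fun a b => meet (compl a) b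
  | _ => fun a b => meet (compl a) (compl b)
  end.
End Ops.

Arguments equiv {L} i _ _.
Arguments classical {L} k _ _.

Inductive olterm : Type :=
| TVa | TVb | TZero | TOne
| TMeet : olterm -> olterm -> olterm
| TJoin : olterm -> olterm -> olterm
| TCompl : olterm -> olterm.

Fixpoint eval_ol (L : Ortholattice) (a b : L) (t : olterm) : L :=
  match t with
  | TVa => a | TVb => b | TZero => zero | TOne => one
  | TMeet s u => meet (eval_ol L a b s) (eval_ol L a b u)
  | TJoin s u => join (eval_ol L a b s) (eval_ol L a b u)
  | TCompl s => compl (eval_ol L a b s)
  end.

(** Terms built from a, b, 0, 1 using only equiv_0..equiv_5 and ' .
    (An index i > 5 in EEquiv is not allowed: see [wf_eqterm].) *)
Inductive eqterm : Type :=
| EVa | EVb | EZero | EOne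
| EEquiv : nat -> eqterm -> eqterm -> eqterm
| ECompl : eqterm -> eqterm.

Fixpoint wf_eqterm (t : eqterm) : Prop :=
  match t with
  | EEquiv i s u => i <= 5 /\ wf_eqterm s /\ wf_eqterm u
  | ECompl s => wf_eqterm s
  | _ => True
  end.

Fixpoint eval_eq (L : Ortholattice) (a b : L) (t : eqterm) : L :=
  match t with
  | EVa => a | EVb => b | EZero => zero | EOne => one
  | EEquiv i s u => equiv i (eval_eq L a b s) (eval_eq L a b u)
  | ECompl s => compl (eval_eq L a b s)
  end.

(** s is a (classical or quantum) join or meet: in every Boolean algebra
    it reduces to one fixed classical join/meet. *)
Definition join_or_meet (s : olterm) : Prop :=
  exists k, k <= 7 /\
    forall B : Ortholattice, boolean B ->
      forall a b : B, eval_ol B a b s = classical k a b.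

(* (i) holds in every ortholattice: substituting b = 0 and simplifying with the
   unit, absorption and complement laws leaves a' in each of the six cases.
   (ii) is witnessed by the two-element Boolean algebra, where every equivalence
   a ==_i b is the XNOR of a and b.  A two-variable Boolean function has an
   algebraic normal form over GF(2) whose coefficient of ab is the XOR of its
   four values; XNOR adds these "parities", so every equivalence term has parity
   0, whereas each classical join or meet takes the value 1 an odd number of
   times and so has parity 1. *)

From Stdlib Require Import Bool Lia.

Section OrthoLattice.
Variable L : Ortholattice.
Implicit Types a b : L.

Lemma join_idem a : join a a = a.
Proof. rewrite <- (meet_absorb L a a) at 2. apply join_absorb. Qed.

Lemma join1 a : join a one = one.
Proof. rewrite <- (join_compl L a), joinA, join_idem. reflexivity. Qed.

Lemma meet0 a : meet a zero = zero.
Proof. rewrite <- (join0 L (meet a zero)), joinC, meetC. apply join_absorb. Qed.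

Lemma meet1l a : meet one a = a.
Proof. rewrite meetC. apply meet1. Qed.

Lemma join0l a : join zero a = a.
Proof. rewrite joinC. apply join0. Qed.

Lemma compl0 : compl (@zero L) = one.
Proof. rewrite <- (join0l (compl zero)). apply join_compl. Qed.

Lemma meet_absorb_r a b : meet b (join a b) = b.
Proof. rewrite joinC. apply meet_absorb. Qed.

Lemma equiv_zero_r (i : nat) a : i <= 5 -> equiv i a zero = compl a.
Proof.
  intros Hi.
  destruct i as [|[|[|[|[|[|i]]]]]]; try lia; simpl;
    unfold equiv0, equiv1, equiv2, equiv3, equiv4, equiv5;
    repeat rewrite ?compl0, ?join0, ?meet1, ?meet0, ?join1, ?meet1l, ?join0l,
      ?meet_absorb_r; reflexivity.
Qed.

End OrthoLattice.

Definition bool_ortholattice : Ortholattice.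
Proof.
  refine {| car := bool; meet := andb; join := orb; compl := negb;
            zero := false; one := true |};
    intros; repeat match goal with x : bool |- _ => destruct x end;
    simpl in *; congruence.
Defined.

Lemma bool_orthomodular : orthomodular bool_ortholattice.
Proof. intros [] []; unfold le; simpl; congruence. Qed.

Lemma bool_boolean : boolean bool_ortholattice.
Proof. intros [] [] []; reflexivity. Qed.

Lemma bool_equiv (i : nat) (x y : bool_ortholattice) :
  i <= 5 -> equiv i x y = negb (xorb x y).
Proof.
  intros Hi.
  destruct i as [|[|[|[|[|[|i]]]]]]; try lia; destruct x, y; reflexivity.
Qed.

Definition parity (f : bool -> bool -> bool) : bool :=
  xorb (xorb (f false false) (f false true)) (xorb (f true false) (f true true)).

Lemma parity_ext (f g : bool -> bool -> bool) :
  (forall x y, f x y = g x y) -> parity f = parity g.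
Proof. intros E. unfold parity. rewrite !E. reflexivity. Qed.

Lemma parity_negb (f : bool -> bool -> bool) :
  parity (fun x y => negb (f x y)) = parity f.
Proof.
  unfold parity.
  destruct (f false false), (f false true), (f true false), (f true true);
    reflexivity.
Qed.

Lemma parity_xorb (f g : bool -> bool -> bool) :
  parity (fun x y => xorb (f x y) (g x y)) = xorb (parity f) (parity g).
Proof.
  unfold parity.
  destruct (f false false), (f false true), (f true false), (f true true),
    (g false false), (g false true), (g true false), (g true true);
    reflexivity.
Qed.

Lemma parity_separates (f g : bool -> bool -> bool) :
  parity f <> parity g -> exists x y, f x y <> g x y.
Proof.
  intros Hp.
  destruct (bool_dec (f false false) (g false false)) as [E00 | N];
    [| now exists false, false].
  destruct (bool_dec (f false true) (g false true)) as [E01 | N];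
    [| now exists false, true].
  destruct (bool_dec (f true false) (g true false)) as [E10 | N];
    [| now exists true, false].
  destruct (bool_dec (f true true) (g true true)) as [E11 | N];
    [| now exists true, true].
  exfalso. apply Hp. unfold parity. rewrite E00, E01, E10, E11. reflexivity.
Qed.

Lemma parity_eqterm (t : eqterm) :
  wf_eqterm t -> parity (fun x y => eval_eq bool_ortholattice x y t) = false.
Proof.
  induction t as [| | | | i s IHs u IHu | s IHs]; simpl; try reflexivity.
  - intros [Hi [Hs Hu]].
    rewrite (parity_ext _ (fun x y =>
               negb (xorb (eval_eq bool_ortholattice x y s)
                          (eval_eq bool_ortholattice x y u))))
      by (intros; apply bool_equiv, Hi).
    rewrite parity_negb, parity_xorb, IHs, IHu by assumption.
    reflexivity.
  - intros Hs. rewrite parity_negb. apply IHs, Hs.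
Qed.

Lemma parity_classical (k : nat) :
  k <= 7 -> parity (@classical bool_ortholattice k) = true.
Proof.
  intros Hk. destruct k as [|[|[|[|[|[|[|[|k]]]]]]]]; try lia; reflexivity.
Qed.

Theorem theorem3 :
  (* (i) *)
  (forall L : Ortholattice, orthomodular L ->
     forall (i : nat), i <= 5 -> forall a : L, compl a = equiv i a zero)
  /\
  (* (ii): no equivalence term is identically equal, in all orthomodular
     lattices, to a classical or quantum join or meet *)
  (forall (t : eqterm) (s : olterm), wf_eqterm t -> join_or_meet s ->
     exists L : Ortholattice, orthomodular L /\
       exists a b : L, eval_eq L a b t <> eval_ol L a b s).
Proof.
  split.
  - intros L _ i Hi a. symmetry. apply equiv_zero_r, Hi.
  - intros t s Ht [k [Hk Hs]].
    exists bool_ortholattice. split; [exact bool_orthomodular |].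
    apply parity_separates.
    rewrite parity_eqterm by exact Ht.
    rewrite (parity_ext _ (@classical bool_ortholattice k))
      by (intros; apply (Hs _ bool_boolean)).
    rewrite parity_classical by exact Hk.
    discriminate.
Qed.
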